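(* Every LAD-AG-groupoid $S$ is paramedial, i.e. $(ab)(cd)=(db)(ca)$ for all $a,b,c,d\in S$, and is left nuclear square, i.e. $a^2(bc)=(a^2b)c$ for all $a,b,c\in S$, where $a^2=aa$.
   Context: A groupoid is a set $S$ with a binary operation written as juxtaposition; $ab\cdot c$ means $(ab)c$ and $a\cdot bc$ means $a(bc)$. An AG-groupoid is a groupoid satisfying the left invertive law $(ab)c=(cb)a$ for all $a,b,c\in S$. An LAD-AG-groupoid (left abelian distributive AG-groupoid) is an AG-groupoid satisfying $a(bc)=(ab)(ca)$ for all $a,b,c\in S$. *)

Definition left_invertive {S : Type} (op : S -> S -> S) : Prop :=
  forall a b c : S, op (op a b) c = op (op c b) a.

Definition AG_groupoid {S : Type} (op : S -> S -> S) : Prop :=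
  left_invertive op.

Definition left_abelian_distributive {S : Type} (op : S -> S -> S) : Prop :=
  forall a b c : S, op a (op b c) = op (op a b) (op c a).

Definition LAD_AG_groupoid {S : Type} (op : S -> S -> S) : Prop :=
  AG_groupoid op /\ left_abelian_distributive op.

Definition paramedial {S : Type} (op : S -> S -> S) : Prop :=
  forall a b c d : S, op (op a b) (op c d) = op (op d b) (op c a).

Definition left_nuclear_square {S : Type} (op : S -> S -> S) : Prop :=
  forall a b c : S, op (op a a) (op b c) = op (op (op a a) b) c.


(* Every AG-groupoid is medial, and combined with the LAD law this shows that
   a(bc) = a(cb).  Applied to x(cd) = ((dx)c)x with x = ab, it lets one swap
   the factors of any product standing left of a product, so products commute
   with each other.  Paramedial follows by permuting factors, and the left
   invertive law ((ab)c)d = (dc)(ab) makes every product, not only a square,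
   left nuclear. *)

Section AGGroupoid.

Variables (S : Type) (op : S -> S -> S).
Local Infix "·" := op (at level 40, left associativity).

Hypothesis invertive : left_invertive op.

Lemma left_invertive_medial (a b c d : S) : (a · b) · (c · d) = (a · c) · (b · d).
Proof.
  rewrite (invertive a b (c · d)), (invertive c d b).
  apply invertive.
Qed.

Hypothesis lad : left_abelian_distributive op.

Lemma right_factor_swap (a b c : S) : a · (b · c) = a · (c · b).
Proof.
  rewrite (lad a b c), left_invertive_medial.
  symmetry; apply lad.
Qed.

Lemma left_factor_swap (a b c d : S) : (a · b) · (c · d) = (b · a) · (c · d).
Proof.
  rewrite (lad (a · b)), (lad (b · a)), invertive, (invertive (b · a)).
  now rewrite (right_factor_swap d a b), (right_factor_swap _ a b).
Qed.

Lemma products_commute (a b c d : S) : (a · b) · (c · d) = (c · d) · (a · b).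
Proof.
  rewrite left_invertive_medial, left_factor_swap, (right_factor_swap _ b d).
  apply left_invertive_medial.
Qed.

Lemma LAD_AG_paramedial : paramedial op.
Proof.
  intros a b c d.
  rewrite products_commute, (left_factor_swap c d), (right_factor_swap _ a b).
  apply left_invertive_medial.
Qed.

Lemma product_left_nuclear (a b c d : S) : (a · b) · (c · d) = ((a · b) · c) · d.
Proof.
  rewrite (invertive (a · b) c d), (right_factor_swap _ c d).
  apply products_commute.
Qed.

End AGGroupoid.

Theorem corollary1 (S : Type) (op : S -> S -> S) :
  LAD_AG_groupoid op -> paramedial op /\ left_nuclear_square op.
Proof.
  intros [invertive lad]; split.
  - exact (LAD_AG_paramedial S op invertive lad).
  - intros a b c; exact (product_left_nuclear S op invertive lad a a b c).
Qed.
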